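(* For any $1\leq j\leq i<n$ and $r\in\mathbb{Z}$: $$E^{(r)}_{j,i+1}=(-1)^{\delta_{r<0}}v^{-jr}\,\Upsilon^{-1}(\tilde e^{(r)}_{j,i+1}),\qquad F^{(r)}_{i+1,j}=(-1)^{\delta_{r>0}}v^{-jr}\,\Upsilon^{-1}(\tilde f^{(r)}_{i+1,j}),$$ where $\delta_{r<0}$ (resp. $\delta_{r>0}$) equals $1$ if $r<0$ (resp. $r>0$) and $0$ otherwise.
   Context: Let $v$ be a formal variable, $(c_{ii'})$ the Cartan matrix of $\mathfrak{sl}_n$, $[a,b]_x=ab-x\,ba$, $\delta(z)=\sum_{r\in\mathbb{Z}}z^r$. $U_v(L\mathfrak{gl}_n)$ is the $\mathbb{C}(v)$-algebra generated by $\{e_{i,r},f_{i,r}\}_{1\leq i<n}^{r\in\mathbb{Z}}\cup\{\varphi^+_{j,s},\varphi^-_{j,-s}\}_{1\leq j\leq n}^{s\in\mathbb{N}}$, with $e_i(z)=\sum_re_{i,r}z^{-r}$, $f_i(z)=\sum_rf_{i,r}z^{-r}$, $\varphi^\pm_j(z)=\sum_{s\geq0}\varphi^\pm_{j,\pm s}z^{\mp s}$, $\psi^\pm_i(z)=(\varphi^\pm_i(z))^{-1}\varphi^\pm_{i+1}(v^{-1}z)$, and relations: $[\varphi^\epsilon_j(z),\varphi^{\epsilon'}_{j'}(w)]=0$, $\varphi^\pm_{j,0}\varphi^\mp_{j,0}=1$; $(z-v^{c_{ii'}}w)e_i(z)e_{i'}(w)=(v^{c_{ii'}}z-w)e_{i'}(w)e_i(z)$;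 $(v^{c_{ii'}}z-w)f_i(z)f_{i'}(w)=(z-v^{c_{ii'}}w)f_{i'}(w)f_i(z)$; $(vz-v^{-1}w)^{\delta_{ji}}(z-vw)^{\delta_{j,i+1}}\varphi^\epsilon_j(z)e_i(w)=(z-w)^{\delta_{ji}}(vz-w)^{\delta_{j,i+1}}e_i(w)\varphi^\epsilon_j(z)$; $(z-w)^{\delta_{ji}}(vz-w)^{\delta_{j,i+1}}\varphi^\epsilon_j(z)f_i(w)=(vz-v^{-1}w)^{\delta_{ji}}(z-vw)^{\delta_{j,i+1}}f_i(w)\varphi^\epsilon_j(z)$; $[e_i(z),f_{i'}(w)]=\frac{\delta_{ii'}}{v-v^{-1}}\delta(z/w)(\psi^+_i(z)-\psi^-_i(z))$; $e_i,e_{i'}$ (and $f_i,f_{i'}$) commute if $c_{ii'}=0$; $[e_i(z_1),[e_i(z_2),e_{i'}(w)]_{v^{-1}}]_v+(z_1\leftrightarrow z_2)=0$ and likewise for $f$ if $c_{ii'}=-1$. Half-currents $e^+_i(z)=\sum_{r\geq0}e_{i,r}z^{-r}$, $e^-_i(z)=-\sum_{r<0}e_{i,r}z^{-r}$, $f^+_i(z)=\sum_{r>0}f_{i,r}z^{-r}$, $f^-_i(z)=-\sum_{r\leq0}f_{i,r}z^{-r}$. $E^{(r)}_{j,i+1}=(v-v^{-1})[e_{i,0},\cdots,[e_{j+1,0},e_{j,r}]_{v^{-1}}\cdots]_{v^{-1}}$, $F^{(r)}_{i+1,j}=(v^{-1}-v)[\cdots[f_{j,r},f_{j+1,0}]_v,\cdots,f_{i,0}]_v$.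 $R_{\mathrm{trig}}(z,w)=(vz-v^{-1}w)\sum_iE_{ii}\otimes E_{ii}+(z-w)\sum_{i\neq j}E_{ii}\otimes E_{jj}+(v-v^{-1})z\sum_{i<j}E_{ij}\otimes E_{ji}+(v-v^{-1})w\sum_{i>j}E_{ij}\otimes E_{ji}$; $U^{\mathrm{rtt}}_v(L\mathfrak{gl}_n)$ is the $\mathbb{C}(v)$-algebra generated by $\{t^\pm_{ij}[\pm r]\}^{r\in\mathbb{N}}$ with relations $t^\pm_{ii}[0]t^\mp_{ii}[0]=1$, $t^+_{ij}[0]=t^-_{ji}[0]=0$ ($j<i$), $R_{\mathrm{trig}}(z,w)T^\epsilon_1(z)T^{\epsilon'}_2(w)=T^{\epsilon'}_2(w)T^\epsilon_1(z)R_{\mathrm{trig}}(z,w)$ for $(\epsilon,\epsilon')\in\{(+,+),(-,-),(-,+)\}$, $T^\pm(z)=\sum t^\pm_{ij}(z)\otimes E_{ij}$, $t^\pm_{ij}(z)=\sum_{r\geq0}t^\pm_{ij}[\pm r]z^{\mp r}$. Gauss decomposition $T^\pm(z)=\tilde F^\pm(z)\tilde G^\pm(z)\tilde E^\pm(z)$ ($\tilde F^\pm$ lower unitriangular with entries $\tilde f^\pm_{ij}(z)$, $\tilde G^\pm=\operatorname{diag}(\tilde g^\pm_i(z))$, $\tilde E^\pm$ upper unitriangular with entries $\tilde e^\pm_{ij}(z)$), with modes $\tilde e^+_{ij}(z)=\sum_{r\geq0}\tilde e^{(r)}_{ij}z^{-r}$, $\tilde e^-_{ij}(z)=\sum_{r<0}\tilde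 e^{(r)}_{ij}z^{-r}$, $\tilde f^+_{ij}(z)=\sum_{r>0}\tilde f^{(r)}_{ij}z^{-r}$, $\tilde f^-_{ij}(z)=\sum_{r\leq0}\tilde f^{(r)}_{ij}z^{-r}$. $\Upsilon\colon U_v(L\mathfrak{gl}_n)\xrightarrow{\sim}U^{\mathrm{rtt}}_v(L\mathfrak{gl}_n)$ is the $\mathbb{C}(v)$-algebra isomorphism given by $e^\pm_i(z)\mapsto\frac{\tilde e^\pm_{i,i+1}(v^iz)}{v-v^{-1}}$, $f^\pm_i(z)\mapsto\frac{\tilde f^\pm_{i+1,i}(v^iz)}{v-v^{-1}}$, $\varphi^\pm_j(z)\mapsto\tilde g^\pm_j(v^jz)$. *)

(* Base field C(v) = {fraction {poly C}}, C = R[i] with R the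
   Stdlib reals (a real closed field via Rstruct), v = the indeterminate 'X. *)
From HB Require Import structures.
From mathcomp Require Import all_boot all_order all_algebra.
From mathcomp Require Import Rstruct.
From mathcomp.real_closed Require Import complex.
From mathcomp Require Import fraction.
Set Implicit Arguments. Unset Strict Implicit. Unset Printing Implicit Defensive.
Import Order.TTheory GRing.Theory Num.Theory.
Local Open Scope ring_scope.

Definition Cx : fieldType := complex Rdefinitions.R.
Definition Kv : fieldType := {fraction {poly Cx}}.
Definition v : Kv := tofrac ('X : {poly Cx}).

(* All gl_n indices below are 1-based naturals, as in the paper. *)

Definition qcomm (A : lalgType Kv) (x : Kv) (a b : A) : A := a * b - x *: (b * a).

Fixpoint Enest (A : lalgType Kv) (e : nat -> int -> A) (j : nat) (r : int) (d : nat) : A :=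
  match d with
  | 0 => e j r
  | d'.+1 => qcomm v^-1 (e (j + d)%N 0) (Enest e j r d')
  end.
Definition Ecal (A : lalgType Kv) (e : nat -> int -> A) (j i : nat) (r : int) : A :=
  (v - v^-1) *: Enest e j r (i - j).

Fixpoint Fnest (A : lalgType Kv) (f : nat -> int -> A) (j : nat) (r : int) (d : nat) : A :=
  match d with
  | 0 => f j r
  | d'.+1 => qcomm v (Fnest f j r d') (f (j + d)%N 0)
  end.
Definition Fcal (A : lalgType Kv) (f : nat -> int -> A) (i j : nat) (r : int) : A :=
  (v^-1 - v) *: Fnest f j r (i - j).

(* pm = true for "+", false for "-" *)

(* half-currents: e^+_i(z) = sum_{r>=0} e_{i,r} z^{-r}, e^-_i(z) = - sum_{r<0} e_{i,r} z^{-r} *)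
Definition e_half (A : lalgType Kv) (pm : bool) (e : nat -> int -> A) (i : nat) (m : int) : A :=
  if pm then (if m <= 0 then e i (- m) else 0) else (if 0 < m then - e i (- m) else 0).
(* f^+_i(z) = sum_{r>0} f_{i,r} z^{-r}, f^-_i(z) = - sum_{r<=0} f_{i,r} z^{-r} *)
Definition f_half (A : lalgType Kv) (pm : bool) (f : nat -> int -> A) (i : nat) (m : int) : A :=
  if pm then (if m < 0 then f i (- m) else 0) else (if 0 <= m then - f i (- m) else 0).
(* phi^+_j(z) = sum_{s>=0} phi^+_{j,s} z^{-s}, phi^-_j(z) = sum_{s>=0} phi^-_{j,-s} z^{s};
   php j s = phi^+_{j,s}, phm j s = phi^-_{j,-s} *)
Definition phi_half (A : lalgType Kv) (pm : bool) (php phm : nat -> nat -> A) (j : nat) (m : int) : A :=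
  if pm then (if m <= 0 then php j `|m|%N else 0) else (if 0 <= m then phm j `|m|%N else 0).

(* t^pm_{ij}(z); tp i j s = t^+_{ij}[s], tm i j s = t^-_{ij}[-s] *)
Definition T_coef (B : lalgType Kv) (pm : bool) (tp tm : nat -> nat -> nat -> B)
  (i j : nat) (m : int) : B :=
  if pm then (if m <= 0 then tp i j `|m|%N else 0) else (if 0 <= m then tm i j `|m|%N else 0).

(* Gauss entries; ee i j r = \tilde e^{(r)}_{ij}, ff i j r = \tilde f^{(r)}_{ij},
   gp i s, gm i s = modes of \tilde g^+_i (z^{-s}) and \tilde g^-_i (z^{s}) *)
Definition et_coef (B : lalgType Kv) (pm : bool) (ee : nat -> nat -> int -> B)
  (i j : nat) (m : int) : B :=
  if pm then (if m <= 0 then ee i j (- m) else 0) else (if 0 < m then ee i j (- m) else 0).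
Definition ft_coef (B : lalgType Kv) (pm : bool) (ff : nat -> nat -> int -> B)
  (i j : nat) (m : int) : B :=
  if pm then (if m < 0 then ff i j (- m) else 0) else (if 0 <= m then ff i j (- m) else 0).
Definition gt_coef (B : lalgType Kv) (pm : bool) (gp gm : nat -> nat -> B)
  (i : nat) (m : int) : B :=
  if pm then (if m <= 0 then gp i `|m|%N else 0) else (if 0 <= m then gm i `|m|%N else 0).

Definition Emat_coef (B : lalgType Kv) (pm : bool) (ee : nat -> nat -> int -> B)
  (i j : nat) (m : int) : B :=
  if i == j then (m == 0)%:R else if (i < j)%N then et_coef pm ee i j m else 0.
Definition Fmat_coef (B : lalgType Kv) (pm : bool) (ff : nat -> nat -> int -> B)
  (i j : nat) (m : int) : B :=
  if i == j then (m == 0)%:R else if (j < i)%N then ft_coef pm ff i j m else 0.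

(* coefficient of z^m in the product of two one-variable series that are both
   supported in nonpositive degrees, or both in nonnegative degrees
   (all nonzero terms have |m1| <= |m|) *)
Definition sconv (B : lalgType Kv) (a b : int -> B) (m : int) : B :=
  \sum_(0 <= k < (2 * `|m|).+1) a (k%:Z - `|m|%:Z) * b (m - (k%:Z - `|m|%:Z)).

Definition gauss_decomp (B : lalgType Kv) (n : nat) (tp tm : nat -> nat -> nat -> B)
  (ee ff : nat -> nat -> int -> B) (gp gm : nat -> nat -> B) : Prop :=
  forall (pm : bool) (i j : nat), (1 <= i <= n)%N -> (1 <= j <= n)%N -> forall m : int,
    T_coef pm tp tm i j m =
    \sum_(1 <= k < n.+1)
       sconv (sconv (Fmat_coef pm ff i k) (gt_coef pm gp gm k)) (Emat_coef pm ee k j) m.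

(* R_trig(z,w) = sum_{i,k,a,b} (Rz i k a b * z + Rw i k a b * w) E_{ia} (x) E_{kb} *)
Definition Rz (i k a b : nat) : Kv :=
  if i == k then (if (a == i) && (b == i) then v else 0)
  else (if (a == i) && (b == k) then 1 else 0)
     + (if [&& a == k, b == i & (i < k)%N] then v - v^-1 else 0).
Definition Rw (i k a b : nat) : Kv :=
  if i == k then (if (a == i) && (b == i) then - v^-1 else 0)
  else (if (a == i) && (b == k) then -1 else 0)
     + (if [&& a == k, b == i & (k < i)%N] then v - v^-1 else 0).

(* R(z,w) T^e_1(z) T^e'_2(w) = T^e'_2(w) T^e_1(z) R(z,w): the coefficient of
   z^m w^p in the (E_{ij} (x) E_{kl})-component *)
Definition RTT_rel (B : lalgType Kv) (n : nat) (e e' : bool)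
  (tp tm : nat -> nat -> nat -> B) : Prop :=
  forall i j k l : nat, (1 <= i <= n)%N -> (1 <= j <= n)%N ->
  (1 <= k <= n)%N -> (1 <= l <= n)%N -> forall m p : int,
  \sum_(1 <= a < n.+1) \sum_(1 <= b < n.+1)
     (Rz i k a b *: (T_coef e tp tm a j (m - 1) * T_coef e' tp tm b l p)
      + Rw i k a b *: (T_coef e tp tm a j m * T_coef e' tp tm b l (p - 1)))
  =
  \sum_(1 <= a < n.+1) \sum_(1 <= b < n.+1)
     (Rz a b j l *: (T_coef e' tp tm k b p * T_coef e tp tm i a (m - 1))
      + Rw a b j l *: (T_coef e' tp tm k b (p - 1) * T_coef e tp tm i a m)).

Definition rtt_relations (B : lalgType Kv) (n : nat) (tp tm : nat -> nat -> nat -> B) : Prop :=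
  [/\ forall i, (1 <= i <= n)%N -> tp i i 0%N * tm i i 0%N = 1 /\ tm i i 0%N * tp i i 0%N = 1,
      forall i j, (1 <= j)%N -> (j < i)%N -> (i <= n)%N -> tp i j 0%N = 0 /\ tm j i 0%N = 0,
      RTT_rel n true true tp tm,
      RTT_rel n false false tp tm &
      RTT_rel n false true tp tm].

From HB Require Import structures.
From mathcomp Require Import all_boot all_order all_algebra.
From mathcomp Require Import Rstruct.
From mathcomp.real_closed Require Import complex.
From mathcomp Require Import fraction.
From mathcomp Require Import zify.
Import Order.TTheory GRing.Theory Num.Theory.
Local Open Scope ring_scope.

(* Since [Upsilon] is an algebra morphism and [E^{(r)}_{j,i+1}] is an iterated
   q-commutator of generators, induction on [i - j] reduces the statement to the
   images of the generators, read off from the definition of [Upsilon], and to the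
   relation [[e~^{(0)}_{i,i+1}, e~^{(r)}_{j,i}]_{v^-1} = (v - v^-1) e~^{(r)}_{j,i+1}]
   in U^rtt (and its analogue for the [f~]).
   That relation comes from the RTT relation between [T^pm(z)] and [T^+[0]]: the
   constant terms [t^+_{i,i}[0]] and [t^+_{i,i+1}[0] = t^+_{i,i}[0] e~^{(0)}_{i,i+1}]
   commute with every [t_{x,s}(z)], [x, s < i], and [e~^{(0)}_{i,i+1}] q-commutes
   with the column [t_{x,i}(z)] into [t_{x,i+1}(z)].  In the Gauss decomposition
   [T = F~ G~ E~] the factors are unitriangular and [G~] has invertible constant
   terms, so by induction on the indices the commutation passes from the entries
   of [T] to those of [F~], [G~], [E~] with indices [< i], and then the q-commutation
   passes from the column [t_{x,i}] to the column [e~_{x,i}]. *)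

Set Implicit Arguments. Unset Strict Implicit. Unset Printing Implicit Defensive.

Lemma v_neq0 : v != 0.
Proof. by rewrite /v tofrac_eq0 polyX_eq0. Qed.

Lemma v_subV_neq0 : v - v^-1 != 0.
Proof.
rewrite subr_eq0; apply/negP => /eqP vE.
have : tofrac ('X * 'X : {poly Cx}) = tofrac 1.
  by rewrite rmorphM rmorph1; change (v * v = 1); rewrite {1}vE mulVf // v_neq0.
move/eqP; rewrite tofrac_eq => /eqP /(congr1 (fun p : {poly Cx} => size p)).
by rewrite -expr2 size_polyXn size_poly1.
Qed.

Lemma vV_sub_neq0 : v^-1 - v != 0.
Proof. by rewrite -opprB oppr_eq0 v_subV_neq0. Qed.

Lemma sum_nat_single (M : nmodType) (n m : nat) (F : nat -> M) :
  (1 <= m <= n)%N -> (forall k, (1 <= k <= n)%N -> k != m -> F k = 0) ->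
  \sum_(1 <= k < n.+1) F k = F m.
Proof.
move=> hm F0; rewrite (bigD1_seq m) /= ?mem_iota ?iota_uniq //; last by lia.
rewrite big1_seq ?addr0 // => k /andP[km]; rewrite mem_iota => hk.
by apply: F0 => //; lia.
Qed.

Lemma commr_of_inverse (R : pzRingType) (g u y : R) :
  u * g = 1 -> g * u = 1 -> GRing.comm g y -> GRing.comm u y.
Proof.
move=> ug gu gy; rewrite /GRing.comm -[u * y]mulr1 -gu mulrA -(mulrA u) -gy.
by rewrite mulrA ug mul1r.
Qed.

Lemma linv_lreg (R : pzRingType) (u g : R) : u * g = 1 -> GRing.lreg g.
Proof. by move=> ug x y gxy; rewrite -[x]mul1r -ug -mulrA gxy mulrA ug mul1r. Qed.

Lemma rinv_rreg (R : pzRingType) (u g : R) : g * u = 1 -> GRing.rreg g.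
Proof. by move=> gu x y xgy; rewrite -[x]mulr1 -gu mulrA xgy -mulrA gu mulr1. Qed.

Section Convolution.

Variable R : pzRingType.
Implicit Types (a b : nat -> R) (N : nat).

Definition conv a b N : R := \sum_(p < N.+1) a p * b (N - p)%N.

Definition delta0 : nat -> R := fun p => (p == 0)%:R.

Lemma eq_conv a a' b b' : a =1 a' -> b =1 b' -> conv a b =1 conv a' b'.
Proof. by move=> aE bE N; apply: eq_bigr => p _; rewrite aE bE. Qed.

Lemma conv_delta0l a : conv delta0 a =1 a.
Proof.
move=> N; rewrite /conv big_ord_recl mul1r subn0 big1 ?addr0 // => p _.
by rewrite mul0r.
Qed.

Lemma conv_delta0r a : conv a delta0 =1 a.
Proof.
move=> N; rewrite /conv big_ord_recr /= subnn mulr1 big1 ?add0r // => p _.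
by rewrite /delta0 subn_eq0 leqNgt ltn_ord mulr0.
Qed.

Lemma conv0l a b : (forall p, a p = 0) -> forall N, conv a b N = 0.
Proof. by move=> a0 N; rewrite /conv big1 // => p _; rewrite a0 mul0r. Qed.

Lemma conv0r a b : (forall p, b p = 0) -> forall N, conv a b N = 0.
Proof. by move=> b0 N; rewrite /conv big1 // => p _; rewrite b0 mulr0. Qed.

Lemma conv_at0 a b : conv a b 0 = a 0%N * b 0%N.
Proof. by rewrite /conv big_ord_recl big_ord0 addr0. Qed.

Lemma commr_conv (c : R) a b N :
  (forall p, GRing.comm c (a p)) -> (forall p, GRing.comm c (b p)) ->
  GRing.comm c (conv a b N).
Proof. by move=> ca cb; apply: commr_sum => p _; apply: commrM. Qed.

Lemma conv_eq0l (u : R) a b :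
  u * a 0%N = 1 -> (forall N, conv a b N = 0) -> forall N, b N = 0.
Proof.
move=> ua ab0; elim/ltn_ind=> N IH.
have := ab0 N; rewrite /conv big_ord_recl subn0 big1 ?addr0 => [abN|p _].
  by rewrite -[b N]mul1r -ua -mulrA abN mulr0.
by rewrite IH ?mulr0 //= subnSK ?leq_subr // ltn_ord.
Qed.

Lemma conv_eq0r (u : R) a b :
  a 0%N * u = 1 -> (forall N, conv b a N = 0) -> forall N, b N = 0.
Proof.
move=> au ba0; elim/ltn_ind=> N IH.
have := ba0 N; rewrite /conv big_ord_recr /= subnn big1 ?add0r => [baN|p _].
  by rewrite -[b N]mulr1 -au mulrA baN mul0r.
by rewrite IH ?mul0r.
Qed.

End Convolution.

Section QCommutator.

Variable B : algType Kv.
Implicit Types (x y c : B) (a b : nat -> B).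

Lemma qcomm1_eq0 x y : qcomm 1 x y = 0 <-> GRing.comm x y.
Proof. by rewrite /qcomm scale1r /GRing.comm; split=> [/subr0_eq|->]; rewrite ?subrr. Qed.

Lemma qcommZ (l a b : Kv) x y : qcomm l (a *: x) (b *: y) = (a * b) *: qcomm l x y.
Proof.
rewrite /qcomm -!scalerAl -!scalerAr !scalerA scalerBr scalerA.
by congr (_ - _ *: _); rewrite mulrC [l * b]mulrC mulrA.
Qed.

Lemma qcommr_sum (l : Kv) c (I : Type) (r : seq I) (P : pred I) (F : I -> B) :
  qcomm l c (\sum_(i <- r | P i) F i) = \sum_(i <- r | P i) qcomm l c (F i).
Proof. by rewrite /qcomm mulr_sumr mulr_suml scaler_sumr -sumrB. Qed.

Lemma qcomml_sum (l : Kv) c (I : Type) (r : seq I) (P : pred I) (F : I -> B) :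
  qcomm l (\sum_(i <- r | P i) F i) c = \sum_(i <- r | P i) qcomm l (F i) c.
Proof. by rewrite /qcomm mulr_sumr mulr_suml scaler_sumr -sumrB. Qed.

Lemma qcomm_convl (l : Kv) c a b N :
  (forall p, GRing.comm c (a p)) -> qcomm l c (conv a b N) = conv a (fun p => qcomm l c (b p)) N.
Proof.
move=> ca; rewrite qcommr_sum; apply: eq_bigr => p _.
by rewrite /qcomm mulrA ca mulrBr -scalerAr !mulrA.
Qed.

Lemma qcomm_convr (l : Kv) c a b N :
  (forall p, GRing.comm c (b p)) -> qcomm l (conv a b N) c = conv (fun p => qcomm l (a p) c) b N.
Proof.
move=> cb; rewrite qcomml_sum; apply: eq_bigr => p _.
by rewrite /qcomm -mulrA -cb mulrBl -scalerAl !mulrA.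
Qed.

Lemma convBZr (k : Kv) a b b' N :
  conv a (fun p => b p - k *: b' p) N = conv a b N - k *: conv a b' N.
Proof.
by rewrite /conv scaler_sumr -sumrB; apply: eq_bigr => p _; rewrite mulrBr scalerAr.
Qed.

Lemma convBZl (k : Kv) a a' b N :
  conv (fun p => a p - k *: a' p) b N = conv a b N - k *: conv a' b N.
Proof.
by rewrite /conv scaler_sumr -sumrB; apply: eq_bigr => p _; rewrite mulrBl scalerAl.
Qed.

End QCommutator.

Lemma lrmorph_qcomm (A B : algType Kv) (U : {lrmorphism A -> B}) (l : Kv) (x y : A) :
  U (qcomm l x y) = qcomm l (U x) (U y).
Proof. by rewrite /qcomm linearB linearZ /= !rmorphM. Qed.

(* [hser pm a] reads a series [a] (coefficient of [z^m]) supported in degrees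
   [m <= 0] (pm = true) or [m >= 0] (pm = false) as a sequence in [N = |m|], so
   that [sconv] becomes [conv]. *)
Definition hdeg (pm : bool) (N : nat) : int := if pm then - N%:Z else N%:Z.

Definition hser (B : algType Kv) (pm : bool) (a : int -> B) (N : nat) : B := a (hdeg pm N).

Definition half_supported (B : algType Kv) (pm : bool) (a : int -> B) : Prop :=
  forall m : int, (if pm then 0 < m else m < 0) -> a m = 0.

Lemma hdeg0 pm : hdeg pm 0 = 0.
Proof. by case: pm. Qed.

Section HalfSeries.

Variables (B : algType Kv) (pm : bool).
Implicit Types a b : int -> B.

Lemma sconv_hser a b N : half_supported pm a -> half_supported pm b ->
  sconv a b (hdeg pm N) = conv (hser pm a) (hser pm b) N.
Proof.
have absN : `|hdeg pm N|%N = N by case: pm; rewrite /hdeg ?abszN.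
rewrite /sconv absN /conv; case: pm => a0 b0.
- rewrite (big_cat_nat (n := N.+1)) //=; last by lia.
  rewrite [X in _ + X]big1_seq ?addr0 => [|k]; last first.
    by rewrite mem_iota => /andP[k1 k2]; rewrite a0 ?mul0r //; lia.
  rewrite big_mkord (reindex_inj rev_ord_inj) /=; apply: eq_bigr => k _.
  by rewrite /hser /hdeg; congr (a _ * b _); have := ltn_ord k; lia.
- rewrite (big_cat_nat (n := N)) //=; last by lia.
  rewrite big1_seq ?add0r => [|k]; last first.
    by rewrite mem_iota => /andP[k1 k2]; rewrite a0 ?mul0r //; lia.
  rewrite -{1}(add0n N) big_addn big_mkord.
  have -> : ((2 * N).+1 - N = N.+1)%N by lia.
  by apply: eq_bigr => k _; rewrite /hser /hdeg; congr (a _ * b _); have := ltn_ord k; lia.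
Qed.

Lemma half_supported_sconv a b :
  half_supported pm a -> half_supported pm b -> half_supported pm (sconv a b).
Proof.
move=> a0 b0 m hm; rewrite /sconv big1_seq // => k; rewrite mem_iota => /andP[k1 k2].
case: pm a0 b0 hm => a0 b0 hm.
- have [hk|hk] := leqP k `|m|%N; first by rewrite b0 ?mulr0 //; lia.
  by rewrite a0 ?mul0r //; lia.
- have [hk|hk] := leqP `|m|%N k; first by rewrite b0 ?mulr0 //; lia.
  by rewrite a0 ?mul0r //; lia.
Qed.

Lemma half_supported_Fmat (ff : nat -> nat -> int -> B) x k :
  half_supported pm (Fmat_coef pm ff x k).
Proof.
move=> m; rewrite /Fmat_coef /ft_coef; case: pm => hm.
  by rewrite (gt_eqF hm) (lt_gtF hm) !if_same.
by rewrite (lt_eqF hm) leNgt hm !if_same.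
Qed.

Lemma half_supported_Emat (ee : nat -> nat -> int -> B) k s :
  half_supported pm (Emat_coef pm ee k s).
Proof.
move=> m; rewrite /Emat_coef /et_coef; case: pm => hm.
  by rewrite (gt_eqF hm) leNgt hm !if_same.
by rewrite (lt_eqF hm) (lt_gtF hm) !if_same.
Qed.

Lemma half_supported_G (gp gm : nat -> nat -> B) k : half_supported pm (gt_coef pm gp gm k).
Proof. by move=> m; rewrite /gt_coef; case: pm => hm; rewrite ?leNgt hm. Qed.

End HalfSeries.

Section GaussFactorization.

Variables (B : algType Kv) (n : nat).
Variables (T F E : nat -> nat -> nat -> B) (G : nat -> nat -> B).
Hypothesis T_factor : forall x s, (1 <= x <= n)%N -> (1 <= s <= n)%N -> forall N,
  T x s N = \sum_(1 <= k < n.+1) conv (conv (F x k) (G k)) (E k s) N.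
Hypotheses (F_diag : forall x, F x x =1 delta0 B) (E_diag : forall x, E x x =1 delta0 B).
Hypothesis F_upper : forall x k N, (x < k)%N -> F x k N = 0.
Hypothesis E_lower : forall k s N, (s < k)%N -> E k s N = 0.
Hypothesis G0_invertible : forall k, (1 <= k <= n)%N ->
  exists u, u * G k 0%N = 1 /\ G k 0%N * u = 1.

Lemma conv_F_diag x b : conv (F x x) b =1 b.
Proof. by move=> N; rewrite (eq_conv (F_diag x) (frefl _)) conv_delta0l. Qed.

Lemma conv_E_diag x a : conv a (E x x) =1 a.
Proof. by move=> N; rewrite (eq_conv (frefl _) (E_diag x)) conv_delta0r. Qed.

(* Induction on [x + s]: the summands of [T x s] with [k < minn x s] commute
   with [c] by induction, those with [k > minn x s] vanish, and the remaining one
   is [conv (F x s) (G s)], [G x] or [conv (G x) (E x s)], whose factors [G] have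
   invertible constant terms. *)
Lemma comm_gauss_factors (c : B) i :
  (i <= n.+1)%N ->
  (forall x s, (1 <= x < i)%N -> (1 <= s < i)%N -> forall N, GRing.comm c (T x s N)) ->
  forall x s, (1 <= x < i)%N -> (1 <= s < i)%N ->
  [/\ forall N, GRing.comm c (F x s N), forall N, GRing.comm c (G (minn x s) N)
    & forall N, GRing.comm c (E x s N)].
Proof.
move=> hi cT x s; move: {2}(x + s)%N (leqnn (x + s)) => M.
elim: M x s => [|M IH] x s xsM hx hs; first by lia.
set m := minn x s.
have c_small k : (1 <= k < m)%N -> forall N, GRing.comm c (conv (conv (F x k) (G k)) (E k s) N).
  move=> hk N; have [cF _ _] := IH x k ltac:(lia) hx ltac:(lia).
  have [_ + _] := IH k k ltac:(lia) ltac:(lia) ltac:(lia); rewrite minnn => cG.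
  have [_ _ cE] := IH k s ltac:(lia) ltac:(lia) hs.
  by apply: commr_conv => // p; apply: commr_conv.
have large0 k N : (m < k)%N -> conv (conv (F x k) (G k)) (E k s) N = 0.
  move=> hk; have [xk|kx] := ltnP x k.
    by apply: conv0l => p; apply: conv0l => q; apply: F_upper.
  by apply: conv0r => p; apply: E_lower; lia.
have c_min N : GRing.comm c (conv (conv (F x m) (G m)) (E m s) N).
  have := cT x s hx hs N; rewrite T_factor; try lia.
  rewrite (bigD1_seq m) /= ?mem_iota ?iota_uniq; try lia.
  set rest := \sum_(_ <- _ | _) _; suff c_rest : GRing.comm c rest.
    by move/commrB => /(_ _ c_rest); rewrite addrK.
  rewrite /rest big_seq_cond; apply: commr_sum => k /andP[]; rewrite mem_iota => k_in km.
  have [kltm|mk] := ltnP k m; first by apply: c_small; lia.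
  by rewrite large0; [apply: commr0|lia].
have c_delta0 N : GRing.comm c (delta0 B N) by apply: commr_nat.
have [xs|sx|xs] := ltngtP x s.
- have mx : m = x by rewrite /m; lia.
  have [_ + _] := IH x x ltac:(lia) hx hx; rewrite minnn => cG.
  have /G0_invertible[u [uG _]] : (1 <= x <= n)%N by lia.
  split; [by move=> N; rewrite F_upper //; apply: commr0 | by rewrite mx |].
  move=> N; apply/qcomm1_eq0; move: N; apply: (conv_eq0l uG) => N.
  rewrite -qcomm_convl //.
  by apply/qcomm1_eq0; have := c_min N; rewrite mx (eq_conv (conv_F_diag x _) (frefl _)).
- have ms : m = s by rewrite /m; lia.
  have [_ + _] := IH s s ltac:(lia) hs hs; rewrite minnn => cG.
  have /G0_invertible[u [_ Gu]] : (1 <= s <= n)%N by lia.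
  split; [| by rewrite ms | by move=> N; rewrite E_lower //; apply: commr0].
  move=> N; apply/esym/qcomm1_eq0; move: N; apply: (conv_eq0r Gu) => N.
  rewrite -qcomm_convr //.
  by apply/qcomm1_eq0/esym; have := c_min N; rewrite ms conv_E_diag.
- subst s; split=> N; rewrite ?F_diag ?E_diag //.
  by have := c_min N; rewrite /m minnn conv_E_diag conv_F_diag.
Qed.

(* Induction on the row index [x]: the summand [k] of the [T]-relation is the
   [E]-relation of row [k] convolved with [conv (F x k) (G k)]. *)
Lemma qcomm_gauss_E (c : B) (l kap : Kv) i :
  (i < n)%N ->
  (forall x k, (1 <= k <= x)%N -> (x < i)%N -> forall N,
     GRing.comm c (F x k N) /\ GRing.comm c (G k N)) ->
  (forall x, (1 <= x < i)%N -> forall N, qcomm l c (T x i N) = kap *: T x i.+1 N) ->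
  forall x, (1 <= x < i)%N -> forall N, qcomm l c (E x i N) = kap *: E x i.+1 N.
Proof.
move=> hi cFG qT.
pose Y k N := qcomm l c (E k i N) - kap *: E k i.+1 N.
have sumY x : (1 <= x < i)%N -> forall N,
    \sum_(1 <= k < n.+1) conv (conv (F x k) (G k)) (Y k) N = 0.
  move=> hx N; transitivity (qcomm l c (T x i N) - kap *: T x i.+1 N).
    rewrite !T_factor; try lia.
    rewrite qcommr_sum scaler_sumr -sumrB; apply: eq_big_nat => k hk.
    have [kx|xk] := leqP k x.
      rewrite convBZr qcomm_convl // => p.
      by apply: commr_conv => q; case: (cFG x k ltac:(lia) ltac:(lia) q).
    have FG0 b : conv (conv (F x k) (G k)) b N = 0.
      by apply: conv0l => p; apply: conv0l => q; apply: F_upper.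
    by rewrite !FG0 /qcomm mulr0 mul0r !scaler0 !subr0.
  by rewrite qT // subrr.
suff Y0 x : (1 <= x < i)%N -> forall N, Y x N = 0 by move=> x hx N; apply/subr0_eq/Y0.
elim/ltn_ind: x => x IH hx.
have /G0_invertible[u [uG _]] : (1 <= x <= n)%N by lia.
apply: (conv_eq0l uG) => N; rewrite -(eq_conv (conv_F_diag x _) (frefl _)) -(sumY x hx N).
rewrite (sum_nat_single (m := x)) //; first lia.
move=> k hk kx; have [xk|kx'] := ltnP x k.
  by apply: conv0l => p; apply: conv0l => q; apply: F_upper.
by apply: conv0r => p; apply: IH; lia.
Qed.

Lemma qcomm_gauss_F (c : B) (l kap : Kv) i :
  (i < n)%N ->
  (forall s k, (1 <= k <= s)%N -> (s < i)%N -> forall N,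
     GRing.comm c (E k s N) /\ GRing.comm c (G k N)) ->
  (forall s, (1 <= s < i)%N -> forall N, qcomm l (T i s N) c = kap *: T i.+1 s N) ->
  forall s, (1 <= s < i)%N -> forall N, qcomm l (F i s N) c = kap *: F i.+1 s N.
Proof.
move=> hi cEG qT.
pose Y k N := qcomm l (F i k N) c - kap *: F i.+1 k N.
have sumY s : (1 <= s < i)%N -> forall N,
    \sum_(1 <= k < n.+1) conv (conv (Y k) (G k)) (E k s) N = 0.
  move=> hs N; transitivity (qcomm l (T i s N) c - kap *: T i.+1 s N).
    rewrite !T_factor; try lia.
    rewrite qcomml_sum scaler_sumr -sumrB; apply: eq_big_nat => k hk.
    have [ks|sk] := leqP k s.
      rewrite qcomm_convr => [|p]; last by case: (cEG s k ltac:(lia) ltac:(lia) p).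
      rewrite -convBZl; apply: eq_conv => // p.
      rewrite qcomm_convr => [|q]; last by case: (cEG s k ltac:(lia) ltac:(lia) q).
      by rewrite -convBZl.
    have E0 a : conv a (E k s) N = 0 by apply: conv0r => p; apply: E_lower.
    by rewrite !E0 /qcomm mulr0 mul0r !scaler0 !subr0.
  by rewrite qT // subrr.
suff Y0 s : (1 <= s < i)%N -> forall N, Y s N = 0 by move=> s hs N; apply/subr0_eq/Y0.
elim/ltn_ind: s => s IH hs.
have /G0_invertible[u [_ Gu]] : (1 <= s <= n)%N by lia.
apply: (conv_eq0r Gu) => N; rewrite -(conv_E_diag s) -(sumY s hs N).
rewrite (sum_nat_single (m := s)) //; first lia.
move=> k hk ks; have [sk|ks'] := ltnP s k.
  by apply: conv0r => p; apply: E_lower.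
by apply: conv0l => p; apply: conv0l => q; apply: IH; lia.
Qed.

End GaussFactorization.

Section RMatrixSums.

Variables (B : algType Kv) (n : nat).
Implicit Type M : nat -> nat -> B.

Definition Rw_diag (x y : nat) : Kv := if x == y then - v^-1 else -1.

Lemma sum_delta2 p q (c : Kv) M : (1 <= p <= n)%N -> (1 <= q <= n)%N ->
  \sum_(1 <= a < n.+1) \sum_(1 <= b < n.+1) ((if (a == p) && (b == q) then c else 0) *: M a b)
  = c *: M p q.
Proof.
move=> hp hq; rewrite (sum_nat_single (m := p)) // => [|a _ ap].
  by rewrite (sum_nat_single (m := q)) ?eqxx // => b _ /negbTE->; rewrite andbF scale0r.
by rewrite big1 // => b _; rewrite (negbTE ap) scale0r.
Qed.

Lemma RwE x y a b : Rw x y a b =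
  (if (a == x) && (b == y) then Rw_diag x y else 0)
  + (if (a == y) && (b == x) then (if (y < x)%N then v - v^-1 else 0) else 0).
Proof.
rewrite /Rw /Rw_diag; case: (x =P y) => [<-|_].
  by rewrite ltnn if_same addr0.
by case: (a == y); case: (b == x); case: (y < x)%N.
Qed.

Lemma RwE_dual s t a b : Rw a b s t =
  (if (a == s) && (b == t) then Rw_diag s t else 0)
  + (if (a == t) && (b == s) then (if (s < t)%N then v - v^-1 else 0) else 0).
Proof.
rewrite /Rw /Rw_diag.
by do ![case: eqP => //= ?; subst]; rewrite ?ltnn ?addr0 ?add0r // ?if_same.
Qed.

Lemma sum_Rw x y M : (1 <= x <= n)%N -> (1 <= y <= n)%N ->
  \sum_(1 <= a < n.+1) \sum_(1 <= b < n.+1) (Rw x y a b *: M a b)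
  = Rw_diag x y *: M x y + (if (y < x)%N then v - v^-1 else 0) *: M y x.
Proof.
move=> hx hy; rewrite -!sum_delta2 // -big_split; apply: eq_bigr => a _.
by rewrite -big_split; apply: eq_bigr => b _; rewrite RwE scalerDl.
Qed.

Lemma sum_Rw_dual s t M : (1 <= s <= n)%N -> (1 <= t <= n)%N ->
  \sum_(1 <= a < n.+1) \sum_(1 <= b < n.+1) (Rw a b s t *: M a b)
  = Rw_diag s t *: M s t + (if (s < t)%N then v - v^-1 else 0) *: M t s.
Proof.
move=> hs ht; rewrite -!sum_delta2 // -big_split; apply: eq_bigr => a _.
by rewrite -big_split; apply: eq_bigr => b _; rewrite RwE_dual scalerDl.
Qed.

End RMatrixSums.

Section RTTConstantTerms.

Variables (B : algType Kv) (n : nat) (tp tm : nat -> nat -> nat -> B).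

Local Notation T pm := (T_coef pm tp tm).

(* Coefficient of [z^m w] in the RTT relation for [T^pm(z)] and [T^+(w)]:
   only the constant term [T^+[0]] of [T^+(w)] contributes. *)
Lemma RTT_tp0 pm : RTT_rel n pm true tp tm ->
  forall x y s t, (1 <= x <= n)%N -> (1 <= y <= n)%N -> (1 <= s <= n)%N -> (1 <= t <= n)%N ->
  forall m : int,
  Rw_diag x y *: (T pm x s m * tp y t 0%N)
    + (if (y < x)%N then v - v^-1 else 0) *: (T pm y s m * tp x t 0%N)
  = Rw_diag s t *: (tp y t 0%N * T pm x s m)
    + (if (s < t)%N then v - v^-1 else 0) *: (tp y s 0%N * T pm x t m).
Proof.
move=> rtt x y s t hx hy hs ht m.
rewrite -(sum_Rw (fun a b => T pm a s m * tp b t 0%N) hx hy).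
rewrite -(sum_Rw_dual (fun a b => tp y b 0%N * T pm x a m) hs ht).
apply: etrans (etrans _ (rtt x s y t hx hs hy ht m 1)) _;
  by do 2!apply: eq_bigr => ? _; rewrite /T_coef /= ?mulr0 ?mul0r scaler0 add0r.
Qed.

(* Coefficient of [z^0 w^(m+1)] in the RTT relation for [T^-(z)] and [T^pm(w)]:
   only the constant term [T^-[0]] of [T^-(z)] contributes. *)
Lemma RTT_tm0 pm : RTT_rel n false pm tp tm ->
  forall x y s t, (1 <= x <= n)%N -> (1 <= y <= n)%N -> (1 <= s <= n)%N -> (1 <= t <= n)%N ->
  forall m : int,
  Rw_diag x y *: (tm x s 0%N * T pm y t m)
    + (if (y < x)%N then v - v^-1 else 0) *: (tm y s 0%N * T pm x t m)
  = Rw_diag s t *: (T pm y t m * tm x s 0%N)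
    + (if (s < t)%N then v - v^-1 else 0) *: (T pm y s m * tm x t 0%N).
Proof.
move=> rtt x y s t hx hy hs ht m.
rewrite -(sum_Rw (fun a b => tm a s 0%N * T pm b t m) hx hy).
rewrite -(sum_Rw_dual (fun a b => T pm y b m * tm x a 0%N) hs ht).
apply: etrans (etrans _ (rtt x s y t hx hs hy ht 0 (m + 1))) _;
  by do 2!apply: eq_bigr => ? _; rewrite addrK {1}/T_coef /= ?mulr0 ?mul0r scaler0 add0r.
Qed.

End RTTConstantTerms.

Section RTTGauss.

Variables (B : algType Kv) (n : nat) (tp tm : nat -> nat -> nat -> B).
Variables (ee ff : nat -> nat -> int -> B) (gp gm : nat -> nat -> B).
Hypotheses (Hrtt : rtt_relations n tp tm) (Hgauss : gauss_decomp n tp tm ee ff gp gm).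

Local Notation T pm := (T_coef pm tp tm).
Local Notation Tser pm x s := (hser pm (T pm x s)).
Local Notation Fser pm x k := (hser pm (Fmat_coef pm ff x k)).
Local Notation Gser pm k := (hser pm (gt_coef pm gp gm k)).
Local Notation Eser pm k s := (hser pm (Emat_coef pm ee k s)).

Lemma gauss_hser pm x s : (1 <= x <= n)%N -> (1 <= s <= n)%N -> forall N,
  Tser pm x s N = \sum_(1 <= k < n.+1) conv (conv (Fser pm x k) (Gser pm k)) (Eser pm k s) N.
Proof.
have hF := @half_supported_Fmat _ pm ff; have hG := @half_supported_G _ pm gp gm.
have hE := @half_supported_Emat _ pm ee.
move=> hx hs N; rewrite {1}/hser Hgauss //; apply: eq_bigr => k _.
rewrite sconv_hser //; last exact: half_supported_sconv.
by apply: eq_conv => // p; rewrite /hser sconv_hser.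
Qed.

Lemma Fser_diag pm x : Fser pm x x =1 delta0 B.
Proof. by move=> N; rewrite /hser /Fmat_coef eqxx /delta0 /hdeg; case: pm; case: N. Qed.

Lemma Eser_diag pm x : Eser pm x x =1 delta0 B.
Proof. by move=> N; rewrite /hser /Emat_coef eqxx /delta0 /hdeg; case: pm; case: N. Qed.

Lemma Fser_upper pm x k N : (x < k)%N -> Fser pm x k N = 0.
Proof. by move=> xk; rewrite /hser /Fmat_coef ltn_eqF // ltnNge ltnW. Qed.

Lemma Eser_lower pm k s N : (s < k)%N -> Eser pm k s N = 0.
Proof. by move=> sk; rewrite /hser /Emat_coef gtn_eqF // ltnNge ltnW. Qed.

Lemma Fser_lower pm x k N : (k < x)%N -> Fser pm x k N = ft_coef pm ff x k (hdeg pm N).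
Proof. by move=> kx; rewrite /hser /Fmat_coef gtn_eqF // kx. Qed.

Lemma Eser_upper pm k s N : (k < s)%N -> Eser pm k s N = et_coef pm ee k s (hdeg pm N).
Proof. by move=> ks; rewrite /hser /Emat_coef ltn_eqF // ks. Qed.

Lemma T_coef0 pm x s : (1 <= x <= n)%N -> (1 <= s <= n)%N ->
  T pm x s 0 = \sum_(1 <= k < n.+1)
    Fser pm x k 0%N * Gser pm k 0%N * Eser pm k s 0%N.
Proof.
move=> hx hs; have := gauss_hser pm hx hs 0; rewrite {1}/hser hdeg0 => ->.
by apply: eq_bigr => k _; rewrite !conv_at0.
Qed.

(* Off the diagonal, [F~^+(z)] and [E~^-(z)] have no constant term. *)
Lemma T_diag0 pm x : (1 <= x <= n)%N -> T pm x x 0 = gt_coef pm gp gm x 0.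
Proof.
move=> hx; rewrite T_coef0 // (sum_nat_single (m := x)) //.
  by rewrite Fser_diag Eser_diag /delta0 mulr1 mul1r /hser hdeg0.
move=> k hk kx; have [xk|xk] := ltnP x k; first by rewrite Fser_upper ?mul0r.
have {}kx : (k < x)%N by lia.
rewrite Fser_lower // Eser_upper // hdeg0 /ft_coef /et_coef.
by case: pm; rewrite ltxx ?mul0r ?mulr0.
Qed.

Lemma Gser0_invertible pm k : (1 <= k <= n)%N ->
  exists u, u * Gser pm k 0%N = 1 /\ Gser pm k 0%N * u = 1.
Proof.
case: Hrtt => tp_tm _ _ _ _ hk; rewrite /hser hdeg0 -T_diag0 // /T_coef /=.
by case: (tp_tm k hk); case: pm; [exists (tm k k 0%N)|exists (tp k k 0%N)].
Qed.

Lemma tp0_superdiag i : (1 <= i)%N -> (i < n)%N -> tp i i.+1 0%N = tp i i 0%N * ee i i.+1 0.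
Proof.
move=> hi hin; have := T_coef0 true (x := i) (s := i.+1) ltac:(lia) ltac:(lia).
rewrite /T_coef /= => ->; rewrite (sum_nat_single (m := i)); try lia.
  rewrite Fser_diag Eser_upper // /hser hdeg0 -T_diag0; last by lia.
  by rewrite /delta0 mul1r /T_coef /et_coef.
move=> k hk ki; have [ik|ik] := ltnP i k; first by rewrite Fser_upper ?mul0r.
by rewrite Fser_lower /ft_coef /= ?mul0r //; lia.
Qed.

Lemma tm0_subdiag i : (1 <= i)%N -> (i < n)%N -> tm i.+1 i 0%N = ff i.+1 i 0 * tm i i 0%N.
Proof.
move=> hi hin; have := T_coef0 false (x := i.+1) (s := i) ltac:(lia) ltac:(lia).
rewrite /T_coef /= => ->; rewrite (sum_nat_single (m := i)); try lia.
  rewrite Fser_lower // Eser_diag /hser hdeg0 -T_diag0; last by lia.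
  by rewrite /delta0 mulr1 /T_coef /ft_coef.
move=> k hk ki; have [ik|ik] := ltnP i k; first by rewrite Eser_lower ?mulr0.
by rewrite Eser_upper /et_coef /= ?mulr0 //; lia.
Qed.

Lemma RTT_plus pm : RTT_rel n pm true tp tm.
Proof. by case: Hrtt => _ _ Hpp _ Hmp; case: pm. Qed.

Lemma RTT_minus pm : RTT_rel n false pm tp tm.
Proof. by case: Hrtt => _ _ _ Hmm Hmp; case: pm. Qed.

Lemma comm_ee0_T pm i x s m : (1 <= x < i)%N -> (1 <= s < i)%N -> (i < n)%N ->
  GRing.comm (ee i i.+1 0) (T pm x s m).
Proof.
case: Hrtt => tp_tm lower _ _ _ hx hs hin.
have [tpm mtp] := tp_tm i ltac:(lia).
have c_tp t : (i <= t <= i.+1)%N -> GRing.comm (tp i t 0%N) (T pm x s m).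
  move=> ht; have := RTT_tp0 (RTT_plus pm) (x := x) (y := i) (s := s) (t := t).
  move/(_ ltac:(lia) ltac:(lia) ltac:(lia) ltac:(lia) m).
  have [-> _] := lower i s ltac:(lia) ltac:(lia) ltac:(lia).
  have [xi ix st] : [/\ (x == i) = false, (i < x)%N = false & (s == t) = false].
    by split; lia.
  rewrite /Rw_diag xi ix st mul0r !scaler0 scale0r !addr0 !scaleN1r.
  by move/oppr_inj.
have e0E : ee i i.+1 0 = tm i i 0%N * tp i i.+1 0%N.
  by rewrite tp0_superdiag ?mulrA ?mtp ?mul1r //; lia.
rewrite e0E; apply/commr_sym/commrM; apply/commr_sym; last by apply: c_tp; lia.
by apply: (commr_of_inverse mtp tpm); apply: c_tp; lia.
Qed.

Lemma qcomm_ee0_T pm i x m : (1 <= x < i)%N -> (i < n)%N ->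
  qcomm v^-1 (ee i i.+1 0) (T pm x i m) = (v - v^-1) *: T pm x i.+1 m.
Proof.
case: Hrtt => tp_tm _ _ _ _ hx hin.
have [tpm mtp] := tp_tm i ltac:(lia).
have [xi ix ii1] : [/\ (x == i) = false, (i < x)%N = false & (i == i.+1) = false].
  by split; lia.
have := RTT_tp0 (RTT_plus pm) (x := x) (y := i) (s := i) (t := i.+1).
move/(_ ltac:(lia) ltac:(lia) ltac:(lia) ltac:(lia) m).
rewrite /Rw_diag xi ix ii1 ltnSn scale0r addr0 !scaleN1r => tpT1.
have := RTT_tp0 (RTT_plus pm) (x := x) (y := i) (s := i) (t := i).
move/(_ ltac:(lia) ltac:(lia) ltac:(lia) ltac:(lia) m).
rewrite /Rw_diag xi ix eqxx ltnn !scale0r !addr0 scaleN1r scaleNr => /oppr_inj tpT0.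
(* Multiplying on the left by [t^+_{ii}[0]] turns [e~^{(0)}_{i,i+1}] into [t^+_{i,i+1}[0]]. *)
apply: (linv_lreg mtp); rewrite /qcomm mulrBr -scalerAr !mulrA -tp0_superdiag; try lia.
rewrite scalerAl -tpT0 -mulrA -tp0_superdiag; try lia.
by rewrite tpT1 addNKr scalerAr.
Qed.

Lemma comm_ff0_T pm i y t m : (1 <= y < i)%N -> (1 <= t < i)%N -> (i < n)%N ->
  GRing.comm (ff i.+1 i 0) (T pm y t m).
Proof.
case: Hrtt => tp_tm lower _ _ _ hy ht hin.
have [tpm mtp] := tp_tm i ltac:(lia).
have c_tm x : (i <= x <= i.+1)%N -> GRing.comm (tm x i 0%N) (T pm y t m).
  move=> hx; have := RTT_tm0 (RTT_minus pm) (x := x) (y := y) (s := i) (t := t).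
  move/(_ ltac:(lia) ltac:(lia) ltac:(lia) ltac:(lia) m).
  have [_ ->] := lower i y ltac:(lia) ltac:(lia) ltac:(lia).
  have [xy it ti] : [/\ (x == y) = false, (i == t) = false & (i < t)%N = false].
    by split; lia.
  rewrite /Rw_diag xy it ti mul0r !scaler0 scale0r !addr0 !scaleN1r.
  by move/oppr_inj/esym.
have f0E : ff i.+1 i 0 = tm i.+1 i 0%N * tp i i 0%N.
  by rewrite tm0_subdiag -?mulrA ?mtp ?mulr1 //; lia.
rewrite f0E; apply/commr_sym/commrM; apply/commr_sym; first by apply: c_tm; lia.
by apply: (commr_of_inverse tpm mtp); apply: c_tm; lia.
Qed.

Lemma qcomm_ff0_T pm i t m : (1 <= t < i)%N -> (i < n)%N ->
  qcomm v (T pm i t m) (ff i.+1 i 0) = (v^-1 - v) *: T pm i.+1 t m.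
Proof.
case: Hrtt => tp_tm _ _ _ _ ht hin.
have [tpm mtp] := tp_tm i ltac:(lia).
have [i1i ii1 it ti] :
    [/\ (i.+1 == i) = false, (i == i.+1) = false, (i == t) = false & (i < t)%N = false].
  by split; lia.
have := RTT_tm0 (RTT_minus pm) (x := i.+1) (y := i) (s := i) (t := t).
move/(_ ltac:(lia) ltac:(lia) ltac:(lia) ltac:(lia) m).
rewrite /Rw_diag i1i it ti ltnSn scale0r !addr0 !scaleN1r => tmT1N.
have tmT1 : T pm i t m * tm i.+1 i 0%N
    = tm i.+1 i 0%N * T pm i t m - (v - v^-1) *: (tm i i 0%N * T pm i.+1 t m).
  by rewrite -[LHS]opprK -tmT1N opprD opprK.
have := RTT_tm0 (RTT_minus pm) (x := i) (y := i) (s := i) (t := t).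
move/(_ ltac:(lia) ltac:(lia) ltac:(lia) ltac:(lia) m).
rewrite /Rw_diag eqxx it ti ltnn !scale0r !addr0 scaleN1r scaleNr => /oppr_inj tmT0.
have := RTT_tm0 (RTT_minus pm) (x := i) (y := i.+1) (s := i) (t := t).
move/(_ ltac:(lia) ltac:(lia) ltac:(lia) ltac:(lia) m).
rewrite /Rw_diag ii1 it ti ltnNge leqnSn !scale0r !addr0 !scaleN1r => /oppr_inj tmT2.
(* Multiplying on the right by [t^-_{ii}[0]] turns [f~^{(0)}_{i+1,i}] into [t^-_{i+1,i}[0]]. *)
apply: (rinv_rreg mtp); rewrite /qcomm mulrBl -scalerAl -!mulrA -tm0_subdiag; try lia.
rewrite -tmT0 -scalerAr scalerA mulfV ?v_neq0 // scale1r mulrA -tm0_subdiag; try lia.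
by rewrite tmT1 addrAC subrr add0r -scaleNr opprB -scalerAl tmT2.
Qed.

Lemma qcomm_ee0_Eser pm i j : (1 <= j < i)%N -> (i < n)%N -> forall N,
  qcomm v^-1 (ee i i.+1 0) (Eser pm j i N) = (v - v^-1) *: Eser pm j i.+1 N.
Proof.
move=> hj hin; pose c := ee i i.+1 0.
have T_factor := gauss_hser pm.
have G0_inv := Gser0_invertible pm.
have cT x s : (1 <= x < i)%N -> (1 <= s < i)%N -> forall N, GRing.comm c (Tser pm x s N).
  by move=> hx hs N; apply: comm_ee0_T.
have := comm_gauss_factors T_factor (Fser_diag pm) (Eser_diag pm) (Fser_upper pm)
  (Eser_lower pm) G0_inv (i := i) ltac:(lia) cT.
move=> cFGE; apply: (qcomm_gauss_E T_factor (Fser_diag pm) (Fser_upper pm) G0_inv) => //.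
- move=> x k hk hx N; have [cF _ _] := cFGE x k ltac:(lia) ltac:(lia).
  by have [_ + _] := cFGE k k ltac:(lia) ltac:(lia); rewrite minnn; split.
- by move=> x hx N; apply: qcomm_ee0_T.
Qed.

Lemma qcomm_ff0_Fser pm i j : (1 <= j < i)%N -> (i < n)%N -> forall N,
  qcomm v (Fser pm i j N) (ff i.+1 i 0) = (v^-1 - v) *: Fser pm i.+1 j N.
Proof.
move=> hj hin; pose c := ff i.+1 i 0.
have T_factor := gauss_hser pm.
have G0_inv := Gser0_invertible pm.
have cT x s : (1 <= x < i)%N -> (1 <= s < i)%N -> forall N, GRing.comm c (Tser pm x s N).
  by move=> hx hs N; apply: comm_ff0_T.
have := comm_gauss_factors T_factor (Fser_diag pm) (Eser_diag pm) (Fser_upper pm)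
  (Eser_lower pm) G0_inv (i := i) ltac:(lia) cT.
move=> cFGE; apply: (qcomm_gauss_F T_factor (Eser_diag pm) (Eser_lower pm) G0_inv) => //.
- move=> s k hk hs N; have [_ _ cE] := cFGE k s ltac:(lia) ltac:(lia).
  by have [_ + _] := cFGE k k ltac:(lia) ltac:(lia); rewrite minnn; split.
- by move=> s hs N; apply: qcomm_ff0_T.
Qed.

Lemma ee_mode_Eser r : exists pm N, forall k s, (k < s)%N -> Eser pm k s N = ee k s r.
Proof.
case: r => [N|M]; [exists true, N|exists false, M.+1] => k s ks;
  by rewrite Eser_upper // /et_coef /hdeg /= ?oppr_le0 ?opprK // NegzE.
Qed.

Lemma ff_mode_Fser r : exists pm N, forall x k, (k < x)%N -> Fser pm x k N = ff x k r.
Proof.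
case: r => [[|N]|M]; [exists false, 0%N|exists true, N.+1|exists false, M.+1] => x k kx;
  by rewrite Fser_lower // /ft_coef /hdeg /= ?opprK // NegzE.
Qed.

Lemma qcomm_ee0 i j r : (1 <= j < i)%N -> (i < n)%N ->
  qcomm v^-1 (ee i i.+1 0) (ee j i r) = (v - v^-1) *: ee j i.+1 r.
Proof.
move=> hj hin; have [pm [N eeE]] := ee_mode_Eser r.
by rewrite -!eeE ?qcomm_ee0_Eser //; lia.
Qed.

Lemma qcomm_ff0 i j r : (1 <= j < i)%N -> (i < n)%N ->
  qcomm v (ff i j r) (ff i.+1 i 0) = (v^-1 - v) *: ff i.+1 j r.
Proof.
move=> hj hin; have [pm [N ffE]] := ff_mode_Fser r.
by rewrite -!ffE ?qcomm_ff0_Fser //; lia.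
Qed.

End RTTGauss.

Section Upsilon.

Variables (A B : algType Kv) (U : {lrmorphism A -> B}).

Lemma lrmorph_Enest (e : nat -> int -> A) (X : nat -> nat -> int -> B) j r (c : Kv) d :
  (forall a, (j < a <= j + d)%N -> U (e a 0) = (v - v^-1)^-1 *: X a a.+1 0) ->
  (forall a, (j < a <= j + d)%N ->
     qcomm v^-1 (X a a.+1 0) (X j a r) = (v - v^-1) *: X j a.+1 r) ->
  U (e j r) = c *: X j j.+1 r ->
  U (Enest e j r d) = c *: X j (j + d).+1 r.
Proof.
move=> Ue0 qX Uejr; elim: d Ue0 qX => [|d IH] Ue0 qX /=; first by rewrite addn0.
have IHd : U (Enest e j r d) = c *: X j (j + d).+1 r.
  by apply: IH => a ha; [apply: Ue0 | apply: qX]; lia.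
rewrite lrmorph_qcomm IHd Ue0; last by lia.
rewrite qcommZ -[(j + d).+1]addnS qX; last by lia.
by rewrite scalerA mulrAC mulVf ?mul1r // v_subV_neq0.
Qed.

Lemma lrmorph_Fnest (f : nat -> int -> A) (Y : nat -> nat -> int -> B) j r (c : Kv) d :
  (forall a, (j < a <= j + d)%N -> U (f a 0) = (v^-1 - v)^-1 *: Y a.+1 a 0) ->
  (forall a, (j < a <= j + d)%N ->
     qcomm v (Y a j r) (Y a.+1 a 0) = (v^-1 - v) *: Y a.+1 j r) ->
  U (f j r) = c *: Y j.+1 j r ->
  U (Fnest f j r d) = c *: Y (j + d).+1 j r.
Proof.
move=> Uf0 qY Ufjr; elim: d Uf0 qY => [|d IH] Uf0 qY /=; first by rewrite addn0.
have IHd : U (Fnest f j r d) = c *: Y (j + d).+1 j r.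
  by apply: IH => a ha; [apply: Uf0 | apply: qY]; lia.
rewrite lrmorph_qcomm IHd Uf0; last by lia.
rewrite qcommZ -[(j + d).+1]addnS qY; last by lia.
by rewrite scalerA mulfVK // vV_sub_neq0.
Qed.

(* The sign comes from [e^-_i(z) = - sum_{r<0} e_{i,r} z^{-r}]. *)
Lemma lrmorph_e (e : nat -> int -> A) (ee : nat -> nat -> int -> B) i :
  (forall pm m, U (e_half pm e i m) = (v ^ (i%:Z * m) / (v - v^-1)) *: et_coef pm ee i i.+1 m) ->
  forall r, U (e i r) = ((-1) ^+ (r < 0)%R * v ^ (- (i%:Z * r)) / (v - v^-1)) *: ee i i.+1 r.
Proof.
move=> Ue r; have [r_ge0|r_lt0] := leP 0 r.
  have := Ue true (- r); rewrite /e_half /et_coef oppr_le0 r_ge0 opprK => ->.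
  by rewrite expr0 mul1r mulrN.
have := Ue false (- r); rewrite /e_half /et_coef oppr_gt0 r_lt0 opprK raddfN => /eqP.
by rewrite eqr_oppLR => /eqP->; rewrite -scaleNr expr1 mulrN mulN1r mulNr.
Qed.

(* The sign comes from [f^-_i(z) = - sum_{r<=0} f_{i,r} z^{-r}]. *)
Lemma lrmorph_f (f : nat -> int -> A) (ff : nat -> nat -> int -> B) i :
  (forall pm m, U (f_half pm f i m) = (v ^ (i%:Z * m) / (v - v^-1)) *: ft_coef pm ff i.+1 i m) ->
  forall r, U (f i r) = ((-1) ^+ (0 < r)%R * v ^ (- (i%:Z * r)) / (v^-1 - v)) *: ff i.+1 i r.
Proof.
have vE : v^-1 - v = - (v - v^-1) by rewrite opprB.
move=> Uf r; have [r_gt0|r_le0] := ltP 0 r.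
  have := Uf true (- r); rewrite /f_half /ft_coef oppr_lt0 r_gt0 opprK => ->.
  by rewrite expr1 vE invrN mulrN mulN1r mulNr mulrN opprK.
have := Uf false (- r); rewrite /f_half /ft_coef oppr_ge0 r_le0 opprK raddfN => /eqP.
by rewrite eqr_oppLR => /eqP->; rewrite -scaleNr expr0 mul1r vE invrN !mulrN.
Qed.

End Upsilon.

Unset Implicit Arguments.

Theorem corollary3p23
  (n : nat)
  (* U^rtt_v(Lgl_n) with its generators and its Gauss decomposition *)
  (B : algType Kv) (tp tm : nat -> nat -> nat -> B)
  (ee ff : nat -> nat -> int -> B) (gp gm : nat -> nat -> B)
  (Hrtt : rtt_relations n tp tm)
  (Hgauss : gauss_decomp n tp tm ee ff gp gm)
  (* U_v(Lgl_n) with its generators e_{i,r}, f_{i,r}, phi^+_{j,s}, phi^-_{j,-s} *)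
  (A : algType Kv) (e f : nat -> int -> A) (php phm : nat -> nat -> A)
  (* the algebra isomorphism Upsilon and its inverse *)
  (Ups : {lrmorphism A -> B}) (Upsinv : B -> A)
  (HUK : cancel Ups Upsinv) (HKU : cancel Upsinv Ups)
  (HUe : forall (i : nat), (1 <= i < n)%N -> forall (pm : bool) (m : int),
     Ups (e_half pm e i m) = (v ^ (i%:Z * m) / (v - v^-1)) *: et_coef pm ee i i.+1 m)
  (HUf : forall (i : nat), (1 <= i < n)%N -> forall (pm : bool) (m : int),
     Ups (f_half pm f i m) = (v ^ (i%:Z * m) / (v - v^-1)) *: ft_coef pm ff i.+1 i m)
  (HUphi : forall (j : nat), (1 <= j <= n)%N -> forall (pm : bool) (m : int),
     Ups (phi_half pm php phm j m) = v ^ (j%:Z * m) *: gt_coef pm gp gm j m) :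
  forall (i j : nat) (r : int), (1 <= j)%N -> (j <= i)%N -> (i < n)%N ->
    Ecal e j i r = ((-1) ^+ (r < 0)%R * v ^ (- (j%:Z * r))) *: Upsinv (ee j i.+1 r) /\
    Fcal f i j r = ((-1) ^+ (0 < r)%R * v ^ (- (j%:Z * r))) *: Upsinv (ff i.+1 j r).
Proof.
move=> i j r hj hji hin; have hjn : (1 <= j < n)%N by lia.
have Ue0 a : (1 <= a < n)%N -> Ups (e a 0) = (v - v^-1)^-1 *: ee a a.+1 0.
  by move=> ha; rewrite (lrmorph_e (HUe a ha)) ltxx mulr0 oppr0 expr0z !mul1r.
have Uf0 a : (1 <= a < n)%N -> Ups (f a 0) = (v^-1 - v)^-1 *: ff a.+1 a 0.
  by move=> ha; rewrite (lrmorph_f (HUf a ha)) ltxx mulr0 oppr0 expr0z !mul1r.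
have iE : i = (j + (i - j))%N by lia.
split; apply: (can_inj HUK); rewrite [RHS]linearZ /= HKU.
- rewrite /Ecal linearZ /= (lrmorph_Enest (c := _ / (v - v^-1)) _ _ (lrmorph_e (HUe j hjn) r)).
  + by rewrite -iE scalerA mulrCA mulfV ?mulr1 // v_subV_neq0.
  + by move=> a ha; apply: Ue0; lia.
  + by move=> a ha; apply: (qcomm_ee0 Hrtt Hgauss); lia.
- rewrite /Fcal linearZ /= (lrmorph_Fnest (c := _ / (v^-1 - v)) _ _ (lrmorph_f (HUf j hjn) r)).
  + by rewrite -iE scalerA mulrCA mulfV ?mulr1 // vV_sub_neq0.
  + by move=> a ha; apply: Uf0; lia.
  + by move=> a ha; apply: (qcomm_ff0 Hrtt Hgauss); lia.
Qed.
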